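(* Let $A,B\in M_n(\mathbb{R}_+)$ and let $C=[A,B]_\oplus = AB\oplus BA$. Suppose $AC=0$ and $BC=0$. Then for every index $t\in\{1,\dots,n\}$: (a) if $a_{it}>0$ for some $i$ (i.e. the $t$-th column of $A$ is nonzero), then the $t$-th row of $C$ is identically $0$; (b) if $b_{it}>0$ for some $i$ (i.e. the $t$-th column of $B$ is nonzero), then the $t$-th row of $C$ is identically $0$.
   Context: Max algebra: $\mathbb{R}_+$ the nonnegative reals with $a\oplus b=\max\{a,b\}$ and ordinary multiplication; for $A,B\in M_n(\mathbb{R}_+)$, $(AB)_{ij}=\max_k a_{ik}b_{kj}$ and $(A\oplus B)_{ij}=\max\{a_{ij},b_{ij}\}$. *)

From mathcomp Require Import all_boot all_order all_algebra.
Set Implicit Arguments. Unset Strict Implicit. Unset Printing Implicit Defensive.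
Import Order.TTheory GRing.Theory Num.Theory.
Local Open Scope ring_scope.

Definition nonneg_mx (R : realFieldType) (n : nat) (A : 'M[R]_n) : Prop :=
  forall i j, 0 <= A i j.

(* max-algebra product: (A (x) B)_{ij} = max_k a_{ik} b_{kj} (0 is the
   neutral element of max on R_+) *)
Definition maxmul (R : realFieldType) (n : nat) (A B : 'M[R]_n) : 'M[R]_n :=
  \matrix_(i, j) \big[Num.max/0]_(k < n) (A i k * B k j).

Definition maxadd (R : realFieldType) (n : nat) (A B : 'M[R]_n) : 'M[R]_n :=
  \matrix_(i, j) Num.max (A i j) (B i j).

Definition maxcomm (R : realFieldType) (n : nat) (A B : 'M[R]_n) : 'M[R]_n :=
  maxadd (maxmul A B) (maxmul B A).

From mathcomp Require Import all_boot all_order all_algebra.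
Set Implicit Arguments. Unset Strict Implicit. Unset Printing Implicit Defensive.
Import Order.TTheory GRing.Theory Num.Theory.
Local Open Scope ring_scope.

(* If [a_it > 0] and [A C = 0], then [a_it c_tj <= (A C)_ij = 0] forces
   [c_tj <= 0], while every entry of a max-algebra product, hence of
   [C = AB (+) BA], is at least [0]. *)

Section MaxAlgebra.

Variables (R : realFieldType) (n : nat).
Implicit Types A B C : 'M[R]_n.

Lemma maxmul_ge0 A B i j : 0 <= maxmul A B i j.
Proof. by rewrite mxE bigmax_ge_id. Qed.

Lemma le_maxmul A B i k j : A i k * B k j <= maxmul A B i j.
Proof. by rewrite mxE (le_bigmax _ (fun k => A i k * B k j)). Qed.

Lemma maxcomm_ge0 A B i j : 0 <= maxcomm A B i j.
Proof. by rewrite mxE le_max maxmul_ge0. Qed.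

Lemma maxmul_eq0_row_eq0 A C i t j :
  maxmul A C = 0 -> 0 <= C t j -> 0 < A i t -> C t j = 0.
Proof.
move=> AC0 Ctj_ge0 Ait_gt0.
have := le_maxmul A C i t j.
by rewrite AC0 mxE pmulr_rle0 // => Ctj_le0; apply/le_anti/andP.
Qed.

End MaxAlgebra.

Theorem lemma3p7 (R : realFieldType) (n : nat) (A B : 'M[R]_n)
  (hA : nonneg_mx A) (hB : nonneg_mx B)
  (hAC : maxmul A (maxcomm A B) = 0)
  (hBC : maxmul B (maxcomm A B) = 0) :
  forall t : 'I_n,
    ((exists i, 0 < A i t) -> forall j, maxcomm A B t j = 0) /\
    ((exists i, 0 < B i t) -> forall j, maxcomm A B t j = 0).
Proof.
move=> t; split=> -[i col_t] j.
- exact: (maxmul_eq0_row_eq0 hAC (maxcomm_ge0 A B t j) col_t).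
- exact: (maxmul_eq0_row_eq0 hBC (maxcomm_ge0 A B t j) col_t).
Qed.
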